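(* Let $\Omega=\{\Omega_1,\dots,\Omega_N\}$ be the vertex set of a directed weighted graph with (not necessarily symmetric) weight function $d$, let $1\le n<N$, and let $r\in\{1,\dots,n\}$. Define, for $t\in\{1,\dots,n\}$, $f(t)=\max\big(MMJ(\Omega_r,\Omega_t~|~\Omega_{[1,n]}),\ d(\Omega_t,\Omega_{n+1})\big)$, and $\mathbb{X}=\{f(t): t\in\{1,\dots,n\}\}$. Then $MMJ(\Omega_r,\Omega_{n+1}~|~\Omega_{[1,n+1]})=\min(\mathbb{X})$.
   Context: $\Omega$ is a finite set of points indexed $\Omega_1,\dots,\Omega_N$, and $\Omega_{[1,n]}=\{\Omega_1,\dots,\Omega_n\}$. $d(x,y)\ge 0$ is the weight of the directed edge from $x$ to $y$ (possibly $d(x,y)\neq d(y,x)$). For a subset $S\subseteq\Omega$, a (directed) path from $i$ to $j$ in $S$ is a finite sequence of points of $S$ (at least two) starting at $i$ and ending at $j$, with no repeated points except that start and end may coincide when $i=j$. A jump of a path is $d(x,y)$ for consecutive points $x$ followed by $y$, and $max\_jump$ of a path is its largest jump. The Min-Max-Jump distance with context $S$ is $MMJ(i,j~|~S)=\min\{max\_jump(\epsilon): \epsilon \text{ a path from } i \text{ to } j \text{ in } S\}$ for $i,j\in S$, with $MMJ(i,i~|~S)=0$. *)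

From HB Require Import structures.
From mathcomp Require Import all_boot all_order all_algebra.
From mathcomp Require Import classical_sets reals.
Set Implicit Arguments. Unset Strict Implicit. Unset Printing Implicit Defensive.
Import Order.TTheory GRing.Theory Num.Theory.
Local Open Scope ring_scope.
Local Open Scope classical_set_scope.

(* The points Omega_1..Omega_N are represented by the indices 'I_N
   (Omega_k  <->  ordinal k-1).  d is the directed weight function. *)

Section MMJ.
Variables (R : realType) (N : nat) (d : 'I_N -> 'I_N -> R).

Definition is_path (S : pred 'I_N) (i j : 'I_N) (p : seq 'I_N) : Prop :=
  [/\ (2 <= size p)%N, head i p = i, last i p = j, all S p &
      (if i == j then uniq (behead p) else uniq p)].

Definition max_jump (p : seq 'I_N) : R :=
  \big[Num.max/0]_(e <- zip p (behead p)) d e.1 e.2.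

Definition MMJ (S : pred 'I_N) (i j : 'I_N) : R :=
  if i == j then 0
  else inf [set max_jump p | p in [set p | is_path S i j p]].

End MMJ.

Definition Omega_prefix (N k : nat) : pred 'I_N := fun i => (i < k)%N.

(** A simple path from [r] to the new point [z = Omega_(n+1)] inside
    [Omega_[1,n+1]] visits [z] only at its end, so it is a path [q] inside
    [Omega_[1,n]] from [r] to some [t] followed by the jump [d(t, z)]; its max
    jump [max (max_jump q) (d t z)] is at least [f t].  Conversely, appending
    [z] to the paths from [r] to [t] inside [Omega_[1,n]] shows
    [MMJ(r, z | Omega_[1,n+1]) <= f t]; the case [t = r] is the direct jump. *)

From HB Require Import structures.
From mathcomp Require Import all_boot all_order all_algebra.
From mathcomp Require Import classical_sets reals.
Set Implicit Arguments. Unset Strict Implicit. Unset Printing Implicit Defensive.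
Import Order.TTheory GRing.Theory Num.Theory.
Local Open Scope ring_scope.
Local Open Scope classical_set_scope.

Lemma le_max_inf (R : realType) (F : set R) (a c : R) :
  F !=set0 -> (forall x, F x -> a <= Num.max x c) -> a <= Num.max (inf F) c.
Proof.
move=> F0 aF; have [ac|ca] := leP a c; first by rewrite le_max ac orbT.
rewrite le_max lb_le_inf // => x /aF.
by rewrite le_max => /orP[//|]; rewrite leNgt ca.
Qed.

Section MaxJump.
Variables (R : realType) (N : nat) (d : 'I_N -> 'I_N -> R).
Hypothesis d_ge0 : forall x y, 0 <= d x y.

Lemma max_jump_ge0 p : 0 <= max_jump d p.
Proof. by rewrite /max_jump; elim/big_ind: _ => // x y x0 y0; rewrite le_max x0. Qed.

Lemma max_jump_cons2 x y p :
  max_jump d [:: x, y & p] = Num.max (d x y) (max_jump d (y :: p)).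
Proof. by rewrite /max_jump /= big_cons. Qed.

Lemma max_jump_pair x y : max_jump d [:: x; y] = d x y.
Proof. by rewrite max_jump_cons2 /max_jump big_nil max_l. Qed.

Lemma max_jump_rcons x p y :
  max_jump d (rcons (x :: p) y) = Num.max (max_jump d (x :: p)) (d (last x p) y).
Proof.
elim: p x => [|a p IHp] x /=; first by rewrite max_jump_pair /max_jump big_nil max_r.
by rewrite max_jump_cons2 IHp max_jump_cons2 maxA.
Qed.

Lemma is_path_pair (S : pred 'I_N) i j : S i -> S j -> is_path S i j [:: i; j].
Proof.
move=> Si Sj; split => //=; first by rewrite Si Sj.
by case: eqVneq => //=; rewrite inE => ->.
Qed.

Lemma MMJ_le_max_jump (S : pred 'I_N) i j p :
  is_path S i j p -> MMJ d S i j <= max_jump d p.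
Proof.
rewrite /MMJ; case: eqP => _ Hp; first exact: max_jump_ge0.
apply: ge_inf; last by exists p.
by exists 0 => _ [q _ <-]; apply: max_jump_ge0.
Qed.

Lemma max_jumps_neq0 (S : pred 'I_N) i j : S i -> S j ->
  [set max_jump d p | p in [set p | is_path S i j p]] !=set0.
Proof.
by move=> Si Sj; exists (max_jump d [:: i; j]), [:: i; j]; first exact: is_path_pair.
Qed.

Lemma le_MMJ (S : pred 'I_N) (i j : 'I_N) a : i != j -> S i -> S j ->
  (forall p, is_path S i j p -> a <= max_jump d p) -> a <= MMJ d S i j.
Proof.
move=> ij Si Sj aS; rewrite /MMJ (negbTE ij).
apply: lb_le_inf; first exact: max_jumps_neq0.
by move=> _ [p /aS ? <-].
Qed.

Lemma le_max_MMJ (S : pred 'I_N) (i j : 'I_N) a c : i != j -> S i -> S j ->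
  (forall p, is_path S i j p -> a <= Num.max (max_jump d p) c) ->
  a <= Num.max (MMJ d S i j) c.
Proof.
move=> ij Si Sj aS; rewrite /MMJ (negbTE ij).
apply: le_max_inf; first exact: max_jumps_neq0.
by move=> _ [p /aS ? <-].
Qed.

Section NewEndpoint.
Variables (S S' : pred 'I_N) (z : 'I_N).
Hypotheses (Sz : ~~ S z) (S'E : forall x, S' x = S x || (x == z)).

Lemma neq_new_end i : S i -> i != z.
Proof. by move=> Si; apply: contraNneq Sz => <-. Qed.

Lemma is_path_rcons_new_end (i j : 'I_N) p :
  i != j -> is_path S i j p -> is_path S' i z (rcons p z).
Proof.
move=> ij [size_p head_p last_p Sp]; rewrite (negbTE ij) => uniq_p.
case: p size_p head_p last_p Sp uniq_p => [|x q] // size_p head_p _ Sp uniq_p.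
move: head_p => /= x_i; subst x.
have iz : i != z by apply: neq_new_end; apply: (allP Sp); apply: mem_head.
split; rewrite -?rcons_cons //.
- by rewrite size_rcons ltnW.
- by rewrite last_rcons.
- by rewrite all_rcons S'E eqxx orbT (sub_all _ Sp) // => u Su; rewrite S'E Su.
- by rewrite (negbTE iz) rcons_uniq uniq_p andbT (contra (allP Sp z)).
Qed.

Lemma MMJ_new_end_le i t :
  S i -> S t -> MMJ d S' i z <= Num.max (MMJ d S i t) (d t z).
Proof.
move=> Si St; have S'z : S' z by rewrite S'E eqxx orbT.
have [<-|it] := eqVneq i t.
  rewrite {2}/MMJ eqxx max_r // -(max_jump_pair i z).
  by apply: MMJ_le_max_jump; apply: is_path_pair; rewrite // S'E Si.
apply: le_max_MMJ => // -[|x q] Hq; first by case: Hq.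
have [_ _ last_q _ _] := Hq; rewrite -last_q /= -max_jump_rcons.
apply: MMJ_le_max_jump; exact: is_path_rcons_new_end it Hq.
Qed.

Lemma max_jump_new_end_ge i p : S i -> is_path S' i z p ->
  exists2 t, S t & Num.max (MMJ d S i t) (d t z) <= max_jump d p.
Proof.
move=> Si [size_p head_p last_p S'p]; rewrite (negbTE (neq_new_end Si)) => uniq_p.
case/lastP: p size_p head_p last_p S'p uniq_p => [|[|x q] y] // _ head_p last_p.
have {head_p} -> : x = i := head_p.
rewrite last_rcons in last_p; subst y.
rewrite all_rcons rcons_uniq => /andP[_ S'q] /andP[zq uniq_q].
have Sq : all S (i :: q).
  apply/allP => u uq; have := allP S'q u uq.
  by rewrite S'E => /orP[//|/eqP uz]; rewrite -uz uq in zq.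
exists (last i q); first by apply: (allP Sq); apply: mem_last.
rewrite max_jump_rcons le_max2 //.
have [<-|it] := eqVneq i (last i q); first by rewrite /MMJ eqxx max_jump_ge0.
apply: MMJ_le_max_jump; split => //; last by rewrite (negbTE it).
by case: q it {Sq S'q zq uniq_q} => //=; rewrite eqxx.
Qed.

End NewEndpoint.

End MaxJump.

Theorem theorem6p1 (R : realType) (N : nat) (d : 'I_N -> 'I_N -> R)
  (d_ge0 : forall x y, 0 <= d x y)
  (n : nat) (hn1 : (1 <= n)%N) (hnN : (n < N)%N)
  (r : 'I_N) (hr : (r < n)%N) :
  let f := fun t : 'I_N =>
    Num.max (MMJ d (Omega_prefix n) r t) (d t (@Ordinal N n hnN)) in
  MMJ d (Omega_prefix n.+1) r (@Ordinal N n hnN)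
  = \big[Num.min/f r]_(t < N | (val t < n)%N) f t.
Proof.
move=> f; set z := Ordinal hnN.
have Sz : ~~ Omega_prefix n z by rewrite /Omega_prefix ltnn.
have S'E x : Omega_prefix n.+1 x = Omega_prefix n x || (x == z).
  by rewrite /Omega_prefix ltnS leq_eqVlt orbC -val_eqE.
have Sr : Omega_prefix n r := hr.
have rz : r != z by rewrite -val_eqE /= neq_ltn hr.
apply/eqP; rewrite eq_le; apply/andP; split.
- by apply: le_bigmin => [|t]; apply: MMJ_new_end_le.
- apply: le_MMJ rz _ _ _ => [||p]; rewrite ?S'E ?Sr ?eqxx ?orbT //.
  case/(max_jump_new_end_ge d_ge0 Sz S'E Sr) => t St ftp.
  exact: le_trans (bigmin_le_cond _ _ St) ftp.
Qed.
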